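(* Let $d\ge 2$. There exist constants $C>1$ and $c\in(0,1)$ depending only on $d$ such that the following holds for every finite field $\mathbb F_q$ of characteristic greater than two. Let $P=\{x\in\mathbb F_q^d: x_1^2+\cdots+x_{d-1}^2=x_d\}$ and $\overline P=\{x\in\mathbb F_q^d: x_1^2+\cdots+x_{d-1}^2=-x_d\}$. Let $a\in\mathbb F_q^d\setminus\overline P$, $E\subset P+a=\{x+a:x\in P\}$ and $F\subset\mathbb F_q^d$. If $|E||F|\ge Cq^d$, then $|\Pi(E,F)|\ge c\,q$.
   Context: $\mathbb F_q$ is a finite field with $q$ elements and characteristic greater than two. For $E,F\subset\mathbb F_q^d$, $\Pi(E,F)=\{x\cdot y: x\in E,\ y\in F\}$ with $x\cdot y=\sum_i x_iy_i$. *)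

From HB Require Import structures.
From mathcomp Require Import all_boot all_order all_algebra.
From mathcomp Require Import reals.
Set Implicit Arguments. Unset Strict Implicit. Unset Printing Implicit Defensive.
Import Order.TTheory GRing.Theory Num.Theory.
Local Open Scope ring_scope.

(* Vectors of F_q^d are row vectors 'rV[F]_d; coordinates x_1..x_d are
   x 0 i for i : 'I_d (0-based), so x_d is the coordinate with index d.-1. *)

Definition dotp (F : finFieldType) (d : nat) (x y : 'rV[F]_d) : F :=
  \sum_(i < d) x 0 i * y 0 i.

Definition paraboloid (F : finFieldType) (d : nat) : {set 'rV[F]_d} :=
  [set x : 'rV[F]_d | [forall j : 'I_d, (j == d.-1 :> nat) ==>
      (\sum_(i < d | i != j) x 0 i ^+ 2 == x 0 j)]].

Definition paraboloid_bar (F : finFieldType) (d : nat) : {set 'rV[F]_d} :=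
  [set x : 'rV[F]_d | [forall j : 'I_d, (j == d.-1 :> nat) ==>
      (\sum_(i < d | i != j) x 0 i ^+ 2 == - x 0 j)]].

Definition translate (F : finFieldType) (d : nat) (A : {set 'rV[F]_d})
  (a : 'rV[F]_d) : {set 'rV[F]_d} := [set x + a | x in A].

Definition dot_set (F : finFieldType) (d : nat) (E G : {set 'rV[F]_d}) : {set F} :=
  [set dotp x y | x in E, y in G].

From HB Require Import structures.
From mathcomp Require Import all_boot all_order all_algebra.
From mathcomp Require Import reals.
From mathcomp Require Import ring lra.
Import Order.TTheory GRing.Theory Num.Theory.

Set Implicit Arguments.
Unset Strict Implicit.
Unset Printing Implicit Defensive.

Local Open Scope ring_scope.

(* Let nu t be the number of pairs (X, Y) in E x G with X . Y = t.  By
   Cauchy-Schwarz on the support of nu, |Pi(E, G)| >= (|E||G|)^2 / sum_t nu t^2,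
   so it suffices to bound the second moment by 2 (|E||G|)^2 / q.  Its variance
   is controlled by the energies h X = q sum_t #{Y in G | X . Y = t}^2 - |G|^2,
   which are nonnegative, invariant under dilations X -> l X, and sum over all X
   to |G| q^d (q - 1), because a nonzero vector is orthogonal to exactly q^(d-1)
   vectors.  For a outside Pbar, every line {l Z} meets P + a in at most two
   points (l solves a quadratic whose constant term is nonzero), so averaging h
   over dilations gives sum_(X in E) h X <= 2 |G| q^d, which is enough as soon
   as |E||G| >= 2 q^d. *)

Section SumsOfSquares.
Variables (R : realFieldType) (I : finType) (A : {pred I}).

Lemma sum_sqr_affine (k c : R) (b : I -> R) :
  \sum_(i in A) (k * b i - c) ^+ 2 =
  k ^+ 2 * \sum_(i in A) b i ^+ 2 - 2 * k * c * \sum_(i in A) b i + #|A|%:R * c ^+ 2.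
Proof.
have expand i : (k * b i - c) ^+ 2 = k ^+ 2 * b i ^+ 2 - 2 * k * c * b i + c ^+ 2.
  by ring.
rewrite (eq_bigr _ (fun i _ => expand i)) !big_split /= sumrN.
by rewrite -!mulr_sumr sumr_const -mulr_natl; ring.
Qed.

Lemma sqr_sum_le_card (b : I -> R) :
  (\sum_(i in A) b i) ^+ 2 <= #|A|%:R * \sum_(i in A) b i ^+ 2.
Proof.
set n : R := #|A|%:R; set S := \sum_(i in A) b i; set T := \sum_(i in A) b i ^+ 2.
have [/card0_eq A0 | A_gt0] := posnP #|A|.
  rewrite /S (eq_bigl _ _ A0) big_pred0_eq expr0n /=.
  by apply: mulr_ge0; [exact: ler0n | apply: sumr_ge0 => i _; exact: sqr_ge0].
(* [n * (n T - S^2)] is the sum of the squares [(n b_i - S)^2]. *)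
have : 0 <= \sum_(i in A) (n * b i - S) ^+ 2 by apply: sumr_ge0 => i _; exact: sqr_ge0.
rewrite sum_sqr_affine -/S -/T -/n.
have -> : n ^+ 2 * T - 2 * n * S * S + n * S ^+ 2 = n * (n * T - S ^+ 2) by ring.
by rewrite pmulr_rge0 ?ltr0n // subr_ge0.
Qed.

End SumsOfSquares.

Lemma sum_indicator_eq (R : pzSemiRingType) (I : finType) (a : I) :
  \sum_(t : I) ((a == t)%:R : R) = 1.
Proof.
rewrite (bigD1 a) //= eqxx big1 ?addr0 // => t.
by rewrite eq_sym => /negbTE ->.
Qed.

Section DotProduct.
Variables (F : finFieldType) (d : nat).
Implicit Types (X Y : 'rV[F]_d).

Lemma dotpZl (l : F) X Y : dotp (l *: X) Y = l * dotp X Y.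
Proof. by rewrite /dotp mulr_sumr; apply: eq_bigr => i _; rewrite mxE mulrA. Qed.

Lemma dotpDl X X' Y : dotp (X + X') Y = dotp X Y + dotp X' Y.
Proof. by rewrite /dotp -big_split; apply: eq_bigr => i _; rewrite mxE mulrDl. Qed.

Lemma dotpBr X Y Y' : dotp X (Y - Y') = dotp X Y - dotp X Y'.
Proof. by rewrite /dotp -sumrB; apply: eq_bigr => i _; rewrite !mxE mulrBr. Qed.

Lemma dotp_delta (k : 'I_d) Y : dotp (delta_mx 0 k) Y = Y 0 k.
Proof.
rewrite /dotp (bigD1 k) //= mxE !eqxx mul1r big1 ?addr0 // => i ik.
by rewrite mxE (negbTE ik) andbF mul0r.
Qed.

End DotProduct.

Section OrthogonalVectors.
Variables (R : nzRingType) (F : finFieldType) (d : nat).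
Local Notation q := (#|{: F}|%:R : R).

Lemma sum_rV_const : \sum_(Z : 'rV[F]_d) (1 : R) = q ^+ d.
Proof. by rewrite sumr_const card_mx mul1n natrX. Qed.

Lemma sum_orthogonal_vec0 : \sum_(Z : 'rV[F]_d) ((dotp Z 0 == 0)%:R : R) = q ^+ d.
Proof.
rewrite -sum_rV_const; apply: eq_bigr => Z _.
by rewrite /dotp big1 ?eqxx // => i _; rewrite mxE mulr0.
Qed.

(* The hyperplane [Z . W = t] is a translate of [Z . W = 0], so the [q] level
   sets of [Z |-> Z . W] all have the same size. *)
Lemma sum_orthogonal_vec (W : 'rV[F]_d) :
  W != 0 -> q * \sum_(Z : 'rV[F]_d) ((dotp Z W == 0)%:R : R) = q ^+ d.
Proof.
move=> W_neq0; have [k Wk_neq0] : exists k, W 0 k != 0.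
  apply/existsP; apply: contraR W_neq0 => /existsPn W0; apply/eqP/rowP => j.
  by rewrite mxE; apply/eqP/negbNE/W0.
have level_set t :
    \sum_(Z : 'rV[F]_d) ((dotp Z W == t)%:R : R) =
    \sum_(Z : 'rV[F]_d) ((dotp Z W == 0)%:R : R).
  rewrite (reindex_inj (addIr (t / W 0 k *: delta_mx 0 k))) /=.
  apply: eq_bigr => Z _; rewrite dotpDl dotpZl dotp_delta divfK //.
  by rewrite -{2}(add0r t) (inj_eq (addIr t)).
transitivity (\sum_(t : F) \sum_(Z : 'rV[F]_d) ((dotp Z W == t)%:R : R)).
  by rewrite (eq_bigr _ (fun t _ => level_set t)) sumr_const mulr_natl.
rewrite exchange_big -sum_rV_const; apply: eq_bigr => Z _; exact: sum_indicator_eq.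
Qed.

End OrthogonalVectors.

Section DotCount.
Variables (R : comNzRingType) (F : finFieldType) (d : nat) (G : {set 'rV[F]_d}).
Implicit Types (Y Z : 'rV[F]_d) (t : F).
Local Notation q := (#|{: F}|%:R : R).
Local Notation g := (#|G|%:R : R).

Definition dot_count Z t : R := \sum_(Y in G) (dotp Z Y == t)%:R.

Lemma sum_dot_count Z : \sum_t dot_count Z t = g.
Proof.
rewrite /dot_count exchange_big /=.
by under eq_bigr do rewrite sum_indicator_eq; rewrite sumr_const.
Qed.

Lemma sum_dot_count_sqr Z :
  \sum_t dot_count Z t ^+ 2 =
  \sum_(Y in G) \sum_(Y' in G) (dotp Z (Y - Y') == 0)%:R.
Proof.
have same_level a b :
    \sum_t (((a == t)%:R : R) * (b == t)%:R) = (a == b)%:R.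
  rewrite (bigD1 a) //= eqxx mul1r big1 ?addr0; first by rewrite eq_sym.
  by move=> t; rewrite eq_sym => /negbTE ->; rewrite mul0r.
under eq_bigr do rewrite expr2 /dot_count mulr_suml.
rewrite exchange_big; apply: eq_bigr => Y _.
under eq_bigr do rewrite mulr_sumr.
rewrite exchange_big; apply: eq_bigr => Y' _.
by rewrite same_level dotpBr subr_eq0.
Qed.

Lemma sum_dot_countZ_sqr (l : F) Z :
  l != 0 -> \sum_t dot_count (l *: Z) t ^+ 2 = \sum_t dot_count Z t ^+ 2.
Proof.
move=> l_neq0; rewrite (reindex_inj (mulfI l_neq0)) /=.
apply: eq_bigr => t _; congr (_ ^+ 2); apply: eq_bigr => Y _.
by rewrite dotpZl (inj_eq (mulfI l_neq0)).
Qed.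

Lemma sum_sum_dot_count_sqr :
  q * \sum_(Z : 'rV[F]_d) \sum_t dot_count Z t ^+ 2 =
  g ^+ 2 * q ^+ d + g * (q ^+ d.+1 - q ^+ d).
Proof.
have orth Y Y' :
    q * \sum_(Z : 'rV[F]_d) ((dotp Z (Y - Y') == 0)%:R : R) =
    q ^+ d + (Y == Y')%:R * (q ^+ d.+1 - q ^+ d).
  have [<- | /negbTE neqYY'] := eqVneq Y Y'.
    by rewrite subrr sum_orthogonal_vec0 mul1r addrC subrK exprS.
  by rewrite mul0r addr0 sum_orthogonal_vec // subr_eq0 neqYY'.
under eq_bigr do rewrite sum_dot_count_sqr.
rewrite exchange_big mulr_sumr.
under eq_bigr do rewrite exchange_big mulr_sumr (eq_bigr _ (fun Y' _ => orth _ Y')).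
rewrite (eq_bigr (fun Y => g * q ^+ d + (q ^+ d.+1 - q ^+ d))); last first.
  move=> Y GY; rewrite big_split /= sumr_const -mulr_suml mulr_natl.
  rewrite (bigD1 Y) //= eqxx mulr1n big1 ?addr0 ?mul1r // => Y' /andP[_ Y'_neqY].
  by rewrite eq_sym (negbTE Y'_neqY).
by rewrite sumr_const -mulr_natl; ring.
Qed.

End DotCount.

Lemma card_field_gt1 (R : numDomainType) (F : finFieldType) : 1 < #|{: F}|%:R :> R.
Proof.
rewrite (_ : 1 = 1%:R) // ltr_nat; apply/card_gt1P; exists 0, 1.
by rewrite !inE eq_sym oner_neq0.
Qed.

Section DotEnergy.
Variables (R : realFieldType) (F : finFieldType) (d : nat) (G : {set 'rV[F]_d}).
Implicit Types (X Z : 'rV[F]_d) (E : {set 'rV[F]_d}).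
Local Notation q := (#|{: F}|%:R : R).
Local Notation g := (#|G|%:R : R).
Local Notation dot_count := (dot_count R G).

Definition dot_energy Z : R := q * \sum_t dot_count Z t ^+ 2 - g ^+ 2.

Lemma dot_energy_ge0 Z : 0 <= dot_energy Z.
Proof.
by rewrite subr_ge0 -(sum_dot_count R G Z) (sqr_sum_le_card predT).
Qed.

Lemma dot_energyZ (l : F) Z : l != 0 -> dot_energy (l *: Z) = dot_energy Z.
Proof. by move=> l_neq0; rewrite /dot_energy sum_dot_countZ_sqr. Qed.

Lemma sum_dot_energy : \sum_Z dot_energy Z = g * q ^+ d * (q - 1).
Proof.
rewrite sumrB -mulr_sumr sum_sum_dot_count_sqr.
have -> : \sum_(Z : 'rV[F]_d) g ^+ 2 = g ^+ 2 * q ^+ d.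
  by rewrite -sum_rV_const mulr_sumr; under [RHS]eq_bigr do rewrite mulr1.
by rewrite [q ^+ d.+1]exprS; ring.
Qed.

(* Averaging over the [q - 1] dilations [l *: X] turns the sum of the energy
   over [E] into a sum over all of 'rV_d, each [Z] being counted once per
   point of [E] on the line through [Z]. *)
Lemma sum_dot_energy_le E (k : nat) :
  (forall Z, #|[set l : F | l *: Z \in E]| <= k)%N ->
  \sum_(X in E) dot_energy X <= k%:R * g * q ^+ d.
Proof.
move=> line_E.
have q1_gt0 : 0 < q - 1 by rewrite subr_gt0 card_field_gt1.
have card_units : \sum_(l : F | l != 0) (1 : R) = q - 1.
  have -> : \sum_(l : F | l != 0) (1 : R) = #|predC1 (0 : F)|%:R by rewrite sumr_const.
  by rewrite cardC1 -subn1 natrB //; apply/card_gt0P; exists 0.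
have dilate X : (q - 1) * dot_energy X = \sum_(l : F | l != 0) dot_energy (l *: X).
  by rewrite -card_units mulr_suml; apply: eq_bigr => l l_neq0; rewrite mul1r dot_energyZ.
have reindex (l : F) : l != 0 ->
    \sum_(X in E) dot_energy (l *: X) = \sum_Z ((l^-1 *: Z \in E)%:R * dot_energy Z).
  move=> l_neq0; rewrite [RHS](reindex_inj (scalerI l_neq0)) /=.
  under [RHS]eq_bigr do rewrite scalerA mulVf // scale1r.
  rewrite big_mkcond /=; apply: eq_bigr => X _.
  by case: (X \in E); rewrite ?mul1r ?mul0r.
have line_count Z : \sum_(l : F | l != 0) ((l^-1 *: Z \in E)%:R : R) <= k%:R.
  rewrite (reindex_inj invr_inj) /=.
  under eq_bigl do rewrite invr_eq0.
  under eq_bigr do rewrite invrK.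
  apply: (@le_trans _ _ #|[set l : F | l *: Z \in E]|%:R); last by rewrite ler_nat.
  rewrite -sum1_card natr_sum big_mkcond [leRHS]big_mkcond /=.
  by apply: ler_sum => l _; rewrite inE; case: (l *: Z \in E); case: (l != 0).
rewrite -(ler_pM2l q1_gt0) mulr_sumr (eq_bigr _ (fun X _ => dilate X)) exchange_big /=.
rewrite (eq_bigr _ reindex) exchange_big /=.
apply: (@le_trans _ _ (\sum_Z k%:R * dot_energy Z)).
  apply: ler_sum => Z _; rewrite -mulr_suml.
  by apply: ler_wpM2r; [exact: dot_energy_ge0 | exact: line_count].
rewrite -mulr_sumr sum_dot_energy.
by have -> : k%:R * (g * q ^+ d * (q - 1)) = (q - 1) * (k%:R * g * q ^+ d) by ring.
Qed.

End DotEnergy.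

Section DotPairs.
Variables (R : realFieldType) (F : finFieldType) (d : nat) (E G : {set 'rV[F]_d}).
Local Notation q := (#|{: F}|%:R : R).
Local Notation e := (#|E|%:R : R).
Local Notation g := (#|G|%:R : R).

Definition dot_pairs (t : F) : R := \sum_(X in E) dot_count R G X t.

Lemma sum_dot_pairs : \sum_t dot_pairs t = e * g.
Proof.
rewrite /dot_pairs exchange_big /=.
by under eq_bigr do rewrite sum_dot_count; rewrite sumr_const mulr_natl.
Qed.

Lemma dot_pairs_eq0 t : t \notin dot_set E G -> dot_pairs t = 0.
Proof.
move=> t_notin; apply: big1 => X EX; apply: big1 => Y GY.
by case: eqP => // XYt; case/negP: t_notin; rewrite -XYt; apply/imset2P; exists X Y.
Qed.

Lemma sqr_card_pairs_le : (e * g) ^+ 2 <= #|dot_set E G|%:R * \sum_t dot_pairs t ^+ 2.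
Proof.
have supp (f : F -> R) : (forall t, t \notin dot_set E G -> f t = 0) ->
    \sum_t f t = \sum_(t in dot_set E G) f t.
  move=> f0; rewrite [RHS]big_mkcond; apply: eq_bigr => t _.
  by case: ifPn => // /f0.
rewrite -sum_dot_pairs supp; last exact: dot_pairs_eq0.
rewrite [X in _ <= _ * X]supp; first exact: sqr_sum_le_card.
by move=> t /dot_pairs_eq0 ->; rewrite expr0n.
Qed.

Lemma sum_dot_pairs_sqr_le :
  q * \sum_t dot_pairs t ^+ 2 <= (e * g) ^+ 2 + e * \sum_(X in E) dot_energy R G X.
Proof.
have q_gt0 : 0 < q by apply: lt_trans (card_field_gt1 R F).
have centered t :
    q * dot_pairs t - e * g = \sum_(X in E) (q * dot_count R G X t - g).
  by rewrite sumrB -mulr_sumr sumr_const [#|E|%:R * _]mulr_natl.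
have energy X : \sum_t (q * dot_count R G X t - g) ^+ 2 = q * dot_energy R G X.
  rewrite (sum_sqr_affine predT) sum_dot_count /dot_energy.
  by rewrite (_ : #|@predT F| = #|{: F}|) //; ring.
have variance :
    \sum_t (q * dot_pairs t - e * g) ^+ 2 <= e * (q * \sum_(X in E) dot_energy R G X).
  rewrite mulr_sumr -(eq_bigr _ (fun X _ => energy X)) exchange_big mulr_sumr /=.
  by apply: ler_sum => t _; rewrite centered; exact: sqr_sum_le_card.
rewrite (sum_sqr_affine predT) sum_dot_pairs (_ : #|@predT F| = #|{: F}|) // in variance.
rewrite -(ler_pM2l q_gt0) -subr_ge0.
have -> : q * ((e * g) ^+ 2 + e * \sum_(X in E) dot_energy R G X)
          - q * (q * \sum_t dot_pairs t ^+ 2) =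
        e * (q * \sum_(X in E) dot_energy R G X)
          - (q ^+ 2 * \sum_t dot_pairs t ^+ 2 - 2 * q * (e * g) * (e * g)
             + q * (e * g) ^+ 2).
  by ring.
by rewrite subr_ge0.
Qed.

Lemma card_dot_set_ge (k : nat) :
  (0 < k)%N -> (forall Z, #|[set l : F | l *: Z \in E]| <= k)%N ->
  k%:R * q ^+ d <= e * g -> q <= 2 * #|dot_set E G|%:R.
Proof.
move=> k_gt0 line_E large.
have q_gt0 : 0 < q by apply: lt_trans (card_field_gt1 R F).
set P := \sum_t dot_pairs t ^+ 2; set N := e * g in large *.
have N_gt0 : 0 < N.
  by apply: lt_le_trans large; rewrite mulr_gt0 ?ltr0n ?exprn_gt0.
have second_moment : q * P <= 2 * N ^+ 2.
  apply: le_trans sum_dot_pairs_sqr_le _.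
  rewrite (_ : 2 * N ^+ 2 = N ^+ 2 + N * N); last by ring.
  rewrite lerD2l; apply: (@le_trans _ _ (e * (k%:R * g * q ^+ d))).
    by apply: ler_wpM2l; [exact: ler0n | exact: sum_dot_energy_le].
  rewrite (_ : e * _ = N * (k%:R * q ^+ d)); last by rewrite /N; ring.
  by apply: ler_wpM2l; [exact: ltW | exact: large].
rewrite -(ler_pM2r (exprn_gt0 2 N_gt0)).
apply: (@le_trans _ _ (q * (#|dot_set E G|%:R * P))).
  by apply: ler_wpM2l; [exact: ltW | exact: sqr_card_pairs_le].
rewrite mulrCA (mulrC 2) -mulrA.
by apply: ler_wpM2l; [exact: ler0n | exact: second_moment].
Qed.

End DotPairs.

Lemma card_roots_quadratic (F : finFieldType) (a2 a1 a0 : F) :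
  a0 != 0 -> (#|[set x : F | (a2 * x ^+ 2 + a1 * x + a0 == 0)%R]| <= 2)%N.
Proof.
move=> a0_neq0.
set p : {poly F} := \poly_(i < 3) [:: a0; a1; a2]`_i.
have p_eval x : p.[x] = a2 * x ^+ 2 + a1 * x + a0.
  by rewrite horner_poly !big_ord_recl big_ord0 /=; ring.
have p_neq0 : p != 0.
  apply: contraNneq a0_neq0 => p0; have := p_eval 0.
  by rewrite p0 horner0 expr0n /= !mulr0 !add0r => ->.
set S := [set x | _].
have roots : all (root p) (enum S) by apply/allP => x; rewrite mem_enum inE /root p_eval.
have := max_poly_roots p_neq0 roots (enum_uniq _).
by rewrite -cardE => S_lt_p; exact: leq_trans S_lt_p (size_poly _ _).
Qed.

Section Paraboloid.
Variables (F : finFieldType) (n : nat).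
Implicit Types (a x Z : 'rV[F]_n.+1).

Lemma paraboloidP x :
  x \in paraboloid F n.+1 ->
  \sum_(i < n.+1 | i != ord_max) x 0 i ^+ 2 = x 0 ord_max.
Proof. by rewrite inE => /forallP/(_ ord_max)/implyP/(_ (eqxx _))/eqP. Qed.

Lemma paraboloid_barPn a :
  a \notin paraboloid_bar F n.+1 ->
  \sum_(i < n.+1 | i != ord_max) a 0 i ^+ 2 + a 0 ord_max != 0.
Proof.
apply: contra => sum_eq0; rewrite inE; apply/forallP => j; apply/implyP => /eqP j_last.
by rewrite (_ : j = ord_max) -?addr_eq0 //; apply: val_inj.
Qed.

Lemma card_line_paraboloid a Z :
  a \notin paraboloid_bar F n.+1 ->
  (#|[set l : F | (l *: Z - a)%R \in paraboloid F n.+1]| <= 2)%N.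
Proof.
move=> /paraboloid_barPn a_gen.
pose A := \sum_(i < n.+1 | i != ord_max) Z 0 i ^+ 2.
pose B := \sum_(i < n.+1 | i != ord_max) 2 * Z 0 i * a 0 i.
pose C := \sum_(i < n.+1 | i != ord_max) a 0 i ^+ 2.
apply: leq_trans (subset_leq_card _) (card_roots_quadratic A (- (B + Z 0 ord_max)) a_gen).
apply/subsetP => l; rewrite ![l \in _]inE => /paraboloidP.
have -> : \sum_(i < n.+1 | i != ord_max) (l *: Z - a) 0 i ^+ 2 = l ^+ 2 * A - l * B + C.
  rewrite !mulr_sumr -sumrB -big_split /=; apply: eq_bigr => i _; rewrite !mxE; ring.
rewrite !mxE => on_P; apply/eqP.
transitivity (l ^+ 2 * A - l * B + C - (l * Z 0 ord_max - a 0 ord_max)).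
  by rewrite /A /B /C; ring.
by rewrite on_P subrr.
Qed.

Lemma card_line_translate_paraboloid a (E : {set 'rV[F]_n.+1}) Z :
  a \notin paraboloid_bar F n.+1 -> E \subset translate (paraboloid F n.+1) a ->
  (#|[set l : F | (l *: Z)%R \in E]| <= 2)%N.
Proof.
move=> a_notin E_sub; apply: leq_trans (subset_leq_card _) (card_line_paraboloid Z a_notin).
by apply/subsetP => l; rewrite ![l \in _]inE => /(subsetP E_sub)/imsetP[x Px ->]; rewrite addrK.
Qed.

End Paraboloid.

Theorem theorem3p9 (R : realType) (d : nat) (hd : (2 <= d)%N) :
  exists (C c : R), 1 < C /\ 0 < c /\ c < 1 /\
    forall (F : finFieldType),
      (forall p : nat, p \in [pchar F] -> (2 < p)%N) ->
      forall (a : 'rV[F]_d) (E G : {set 'rV[F]_d}),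
        a \notin paraboloid_bar F d ->
        E \subset translate (paraboloid F d) a ->
        C * (#|{: F}|%:R) ^+ d <= (#|E| * #|G|)%:R ->
        c * #|{: F}|%:R <= (#|dot_set E G|)%:R.
Proof.
case: d hd => [// | n _].
exists 2, 2^-1; split; first lra; split; first lra; split; first lra.
move=> F _ a E G a_notin E_sub large.
have lines_E Z := card_line_translate_paraboloid Z a_notin E_sub.
rewrite natrM in large.
have := @card_dot_set_ge R F n.+1 E G 2 isT lines_E large.
lra.
Qed.
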